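(* Let \[0 \to A \xrightarrow{f} B \xrightarrow{g} C \to 0\] be a sequence of Hausdorff topological abelian groups and continuous homomorphisms which is exact as a sequence of abelian groups. Suppose that $f$ is a closed map and that for every compact subset $K \subseteq C$ there is a compact subset $B' \subseteq B$ with $g(B') \supseteq K$. Then the induced sequence of condensed abelian groups \[0 \to \underline{A} \to \underline{B} \to \underline{C} \to 0\] is exact.
   Context: An extremally disconnected set is a projective object in the category of compact Hausdorff spaces. A condensed set (resp. condensed abelian group) is a functor $T$ from the opposite of the category of extremally disconnected sets to sets (resp. abelian groups) with $T(\emptyset)=*$, $T(S_1\sqcup S_2)=T(S_1)\times T(S_2)$, and which is the left Kan extension of its restriction to $\kappa$-small extremally disconnected sets for some uncountable strong limit cardinal $\kappa$. For a T1 topological space (resp. topological abelian group) $X$, its condensation $\underline{X}$ is the condensed set (resp. condensed abelian group) $S \mapsto C(S,X)$, the continuous maps from $S$ to $X$. In condensed abelian groups, kernels and cokernels are computed sectionwise, so a sequence is exact iff it is exact after evaluation at every extremally disconnected $S$. *)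

From HB Require Import structures.
From mathcomp Require Import all_boot all_order all_algebra.
From mathcomp Require Import all_classical all_reals all_analysis.
Set Implicit Arguments. Unset Strict Implicit. Unset Printing Implicit Defensive.
Import GRing.Theory.
Local Open Scope classical_set_scope.
Local Open Scope ring_scope.

Definition compact_hausdorff (X : topologicalType) : Prop :=
  compact [set: X] /\ hausdorff_space X.

(* Extremally disconnected set := projective object in the category of
   compact Hausdorff spaces (and continuous maps): it is compact Hausdorff,
   and every continuous map into Y lifts along every continuous surjection
   X ->> Y of compact Hausdorff spaces. *)
Definition extremally_disconnected (S : topologicalType) : Prop :=
  compact_hausdorff S /\
  forall (X Y : topologicalType), compact_hausdorff X -> compact_hausdorff Y ->
  forall (p : X -> Y), continuous p -> (forall y : Y, exists x : X, p x = y) ->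
  forall (h : S -> Y), continuous h ->
  exists l : S -> X, continuous l /\ p \o l = h.

Definition closed_map (X Y : topologicalType) (f : X -> Y) : Prop :=
  forall D : set X, closed D -> closed (f @` D).

Definition short_exact (A B C : zmodType) (f : A -> B) (g : B -> C) : Prop :=
  [/\ injective f,
      (forall b : B, g b = 0 <-> exists a : A, f a = b)
    & (forall c : C, exists b : B, g b = c)].

(* Evaluation of 0 -> A(_) -> B(_) -> C(_) -> 0 (condensations,
   S |-> C(S, X)) at S, written out: exactness of the sequence of abelian
   groups 0 -> C(S,A) -> C(S,B) -> C(S,C) -> 0, maps given by postcomposition. *)
Definition exact_at (S : topologicalType) (A B C : topologicalZmodType)
  (f : A -> B) (g : B -> C) : Prop :=
  [/\ (forall u v : S -> A, continuous u -> continuous v ->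
         f \o u = f \o v -> u = v),
      (forall v : S -> B, continuous v ->
         (g \o v = (fun _ => 0) <->
          exists u : S -> A, continuous u /\ f \o u = v))
    & (forall w : S -> C, continuous w ->
         exists v : S -> B, continuous v /\ g \o v = w)].

Definition condensed_short_exact (A B C : topologicalZmodType)
  (f : A -> B) (g : B -> C) : Prop :=
  forall S : topologicalType, extremally_disconnected S -> exact_at S f g.

(* Injectivity and exactness in the middle hold pointwise; the only topology
   involved is that a closed continuous injection is a closed embedding, so the
   pointwise preimage under f of a continuous map is continuous.  Surjectivity
   uses projectivity of S: the image K of w : S -> C is compact, the compact set
   D = B' ∩ g⁻¹(K) maps onto K, and lifting S -> K along the surjection D ->> K
   of compact Hausdorff spaces lifts w. *)

From HB Require Import structures.
From mathcomp Require Import all_boot all_order all_algebra.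
From mathcomp Require Import all_classical all_reals all_analysis.
Set Implicit Arguments. Unset Strict Implicit. Unset Printing Implicit Defensive.
Import GRing.Theory.
Local Open Scope classical_set_scope.
Local Open Scope ring_scope.

Lemma injective_continuous_hausdorff (X Y : topologicalType) (h : X -> Y) :
  injective h -> continuous h -> hausdorff_space Y -> hausdorff_space X.
Proof.
move=> hinj ch hY p q pq; apply: hinj; apply: hY => P Q hpP hqQ.
have [x [Px Qx]] := pq _ _ (ch p _ hpP) (ch q _ hqQ).
by exists (h x).
Qed.

Section set_type_topology.
Variable T : topologicalType.

Lemma continuous_set_val (A : set T) : continuous (set_val : set_type A -> T).
Proof. exact: initial_continuous. Qed.

Lemma continuous_into_set_type (X : topologicalType) (A : set T)
    (h : X -> set_type A) :
  continuous (set_val \o h) -> continuous h.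
Proof. exact: continuous_comp_initial. Qed.

Lemma hausdorff_set_type (A : set T) :
  hausdorff_space T -> hausdorff_space (set_type A).
Proof. exact/injective_continuous_hausdorff/continuous_set_val/val_inj. Qed.

Lemma compact_set_type (A : set T) : compact A -> compact [set: set_type A].
Proof.
move=> cA; have [->|/set0P [a Aa]] := eqVneq A set0.
  suff -> : [set: set_type (@set0 T)] = set0 by exact: compact0.
  by rewrite predeqE => -[x Ax]; have := set_mem Ax.
pose r : T -> set_type A := valL_ (exist _ a (mem_set Aa)) id.
have rK : sigL A r = id by exact: valLK.
have cr : {within A, continuous r}.
  by apply/subspace_sigL_continuousP; rewrite rK => x.
suff <- : r @` A = setT by exact: continuous_compact.
rewrite predeqE => x; split => // _; exists (set_val x); first exact: set_valP.
exact: (congr1 (@^~ x) rK).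
Qed.

End set_type_topology.

Lemma closed_embedding_continuous_lift (X A B : topologicalType) (f : A -> B)
    (u : X -> A) :
  injective f -> closed_map f -> continuous (f \o u) -> continuous u.
Proof.
move=> finj fclosed /continuous_closedP cfu; apply/continuous_closedP => D cD.
suff -> : u @^-1` D = (f \o u) @^-1` (f @` D) by apply: cfu; exact: fclosed.
rewrite predeqE => x; split => [Dux|[a Da /finj ax]]; first by exists (u x).
by move: Da; rewrite ax.
Qed.

Lemma inj_postcomp (S X Y : Type) (f : X -> Y) :
  injective f -> injective (fun u : S -> X => f \o u).
Proof.
by move=> finj u v fuv; apply/funext => s; apply/finj/(congr1 (@^~ s) fuv).
Qed.

Lemma postcomp_kerP (A B C : topologicalZmodType) (f : A -> B) (g : B -> C)
    (S : topologicalType) (v : S -> B) :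
  short_exact f g -> closed_map f -> continuous v ->
  g \o v = (fun _ => 0) <-> exists u : S -> A, continuous u /\ f \o u = v.
Proof.
case=> finj gker _ fclosed cv; split => [gv0|[u [_ <-]]].
  have [u fu] := @choice S A (fun s a => f a = v s)
    (fun s => (gker (v s)).1 (congr1 (@^~ s) gv0)).
  have fuv : f \o u = v by apply/funext => s; exact: fu.
  exists u; split => //.
  by apply: (closed_embedding_continuous_lift finj fclosed); rewrite fuv.
by apply/funext => s /=; apply/gker; exists (u s).
Qed.

Section projective_lift.
Variables (B C : topologicalType) (g : B -> C).
Hypotheses (hB : hausdorff_space B) (hC : hausdorff_space C) (cg : continuous g).

Lemma extremally_disconnected_lift_on (S : topologicalType) (K : set C)
    (D : set B) (w : S -> C) :
  extremally_disconnected S -> compact K -> compact D ->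
  K `<=` g @` D -> D `<=` g @^-1` K ->
  continuous w -> range w `<=` K ->
  exists v : S -> B, continuous v /\ g \o v = w.
Proof.
move=> [_ lift] cK cD KgD DK cw wK.
pose p (x : set_type D) : set_type K :=
  exist _ (g (set_val x)) (mem_set (DK _ (set_valP x))).
pose h (s : S) : set_type K := exist _ (w s) (mem_set (wK _ (imageT w s))).
have cp : continuous p.
  apply: continuous_into_set_type => x.
  apply: (@continuous_comp _ _ _ set_val g); first exact: continuous_set_val.
  exact: cg.
have ch : continuous h by exact: continuous_into_set_type.
have p_surj (y : set_type K) : exists x, p x = y.
  have [b Db gb] := KgD _ (set_valP y).
  by exists (exist _ b (mem_set Db)); apply: val_inj.
have [l [cl plh]] := lift _ _
  (conj (compact_set_type cD) (@hausdorff_set_type _ D hB))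
  (conj (compact_set_type cK) (@hausdorff_set_type _ K hC)) p cp p_surj h ch.
exists (set_val \o l); split.
  by move=> s; apply: continuous_comp; [exact: cl|exact: continuous_set_val].
by apply/funext => s; exact: (congr1 (fun k => set_val (k s)) plh).
Qed.

Lemma extremally_disconnected_lift (S : topologicalType) (w : S -> C) :
  (forall K : set C, compact K ->
     exists B' : set B, compact B' /\ K `<=` g @` B') ->
  extremally_disconnected S -> continuous w ->
  exists v : S -> B, continuous v /\ g \o v = w.
Proof.
move=> glift edS cw; have [[cS _] _] := edS.
have cK : compact (range w).
  exact: continuous_compact (continuous_subspaceT cw) cS.
have [B' [cB' KgB']] := glift _ cK.
pose D := B' `&` g @^-1` range w.
have cD : compact D.
  apply: compact_closedI => //; apply: preimage_closed => //.
  exact: compact_closed.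
apply: (extremally_disconnected_lift_on edS cK cD) => //; last by move=> b [].
move=> c Kc.
have [b B'b gb] := KgB' _ Kc.
by exists b => //; split => //=; rewrite gb.
Qed.

End projective_lift.

Theorem mainTheorem1 (A B C : topologicalZmodType)
  (hA : hausdorff_space A) (hB : hausdorff_space B) (hC : hausdorff_space C)
  (f : {additive A -> B}) (g : {additive B -> C})
  (cf : continuous f) (cg : continuous g)
  (ex : short_exact f g)
  (fclosed : closed_map f)
  (glift : forall K : set C, compact K ->
     exists B' : set B, compact B' /\ K `<=` g @` B') :
  condensed_short_exact f g.
Proof.
have [finj _ _] := ex.
move=> S edS; split.
- by move=> u v _ _; exact: inj_postcomp.
- by move=> v cv; exact: postcomp_kerP.
- by move=> w cw; exact: extremally_disconnected_lift.
Qed.
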